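(* Let $G$ be a simple connected graph on $n$ vertices with clique number $\omega$, $2\le\omega\le n-1$, and Wiener index $W$. Let $G_1,\dots,G_k$ be all the cliques of order $\omega$, $s_i=\sum_{v_j\in V(G_i)}D_j$, $a_i=n\omega(1-\omega)+4\omega(s_i-W)-ns_i$ and $b_i=4W\omega(\omega-1)+4s_i(W-s_i)$ for $1\le i\le k$. Then (i) $\displaystyle q^{\mathcal{D}}(G)\ge \max_{1\le i\le k}\frac{-a_i+\sqrt{a_i^{2}-4b_i(n-\omega)\omega}}{2(n-\omega)\omega}$; (ii) $\displaystyle q^{\mathcal{D}}_{min}(G)\le \min_{1\le i\le k}\frac{-a_i-\sqrt{a_i^{2}-4b_i(n-\omega)\omega}}{2(n-\omega)\omega}$.
   Context: $G$ has vertex set $\{v_1,\dots,v_n\}$; $d_G$ is the graph distance; $\mathcal{D}(G)=(d_G(v_i,v_j))$. $D_j=\sum_{l\ne j}d_G(v_j,v_l)$, $Tr(G)=\mathrm{diag}(D_1,\dots,D_n)$, $\mathcal{Q}(G)=Tr(G)+\mathcal{D}(G)$. $W=\sum_{i<j}d_G(v_i,v_j)$. The clique number is the largest order of a complete subgraph. $q^{\mathcal{D}}(G)$, $q^{\mathcal{D}}_{min}(G)$ are the largest and least eigenvalues of $\mathcal{Q}(G)$. *)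

From HB Require Import structures.
From mathcomp Require Import all_boot all_order all_algebra.
From mathcomp.real_closed Require Import polyrcf.
Set Implicit Arguments. Unset Strict Implicit. Unset Printing Implicit Defensive.
Import Order.TTheory GRing.Theory Num.Theory.
Local Open Scope ring_scope.

Section Graphs.
Variable n : nat.
Variable e : rel 'I_n.

Definition simple_graph : Prop := symmetric e /\ irreflexive e.

Definition connected_graph : Prop := forall i j : 'I_n, connect e i j.

Definition walk_of_length (k : nat) (i j : 'I_n) : bool :=
  [exists p : k.-tuple 'I_n, path e i p && (last i p == j)].

(* graph distance: the least length of a walk from i to j
   (in a connected graph on n vertices this is < n) *)
Definition gdist (i j : 'I_n) : nat :=
  find (fun k => walk_of_length k i j) (iota 0 n).

Definition is_clique (A : {set 'I_n}) : bool :=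
  [forall x in A, forall y in A, (x != y) ==> e x y].

Definition clique_number : nat :=
  \max_(A : {set 'I_n} | is_clique A) #|A|.

Definition max_order_clique (A : {set 'I_n}) : bool :=
  is_clique A && (#|A| == clique_number).

Variable R : rcfType.

Definition transmission (j : 'I_n) : R :=
  \sum_(l < n | l != j) (gdist j l)%:R.

Definition wiener : R := \sum_(i < n) \sum_(j < n | (i < j)%N) (gdist i j)%:R.

Definition dist_mx : 'M[R]_n := \matrix_(i, j) (gdist i j)%:R.
Definition trans_mx : 'M[R]_n := diag_mx (\row_j transmission j).
Definition signless_dist_lap : 'M[R]_n := trans_mx + dist_mx.

(* spectrum = real roots of the characteristic polynomial (sorted increasingly) *)
Definition Q_spectrum : seq R := rootsR (char_poly signless_dist_lap).

Definition qD_max : R := \big[Num.max/head 0 Q_spectrum]_(x <- Q_spectrum) x.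
Definition qD_min : R := \big[Num.min/head 0 Q_spectrum]_(x <- Q_spectrum) x.

Definition s_of (A : {set 'I_n}) : R := \sum_(j in A) transmission j.

Definition a_of (A : {set 'I_n}) : R :=
  let w := (clique_number)%:R in let s := s_of A in
  n%:R * w * (1 - w) + 4 * w * (s - wiener) - n%:R * s.

Definition b_of (A : {set 'I_n}) : R :=
  let w := (clique_number)%:R in let s := s_of A in
  4 * wiener * w * (w - 1) + 4 * s * (wiener - s).

End Graphs.

From HB Require Import structures.
From mathcomp Require Import all_boot all_order all_algebra.
From mathcomp.real_closed Require Import polyrcf complex.
From mathcomp Require Import zify ring lra.
Set Implicit Arguments. Unset Strict Implicit. Unset Printing Implicit Defensive.
Import Order.TTheory GRing.Theory Num.Theory.
Local Open Scope ring_scope.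

(* Let A be a maximum clique, w = #|A|, s the sum of the transmissions of the
   vertices of A, and x the vector equal to al on A and to be elsewhere.
   Row i of Q sums to 2 D_i and distances inside A are 1, so the sums of Q
   over the blocks A*A, A*~A, ~A*~A are S11 = s + w(w-1), S12 = s - w(w-1)
   and S22 = 4W - 3s + w(w-1); hence x^T Q x = al^2 S11 + 2 al be S12 +
   be^2 S22 while x^T x = al^2 w + be^2 (n - w). By the spectral theorem
   q_min x^T x <= x^T Q x <= q_max x^T x for all al, be, i.e. the 2x2
   matrices q_max diag(w, n-w) - S and S - q_min diag(w, n-w) are positive
   semidefinite. So q_max (resp. q_min) lies above the larger (resp. below
   the smaller) root of det (t diag(w, n-w) - S) = w(n-w) t^2 + a t + b. *)

Section NormalSpectral.
Local Open Scope sesquilinear_scope.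
Context {C : numClosedFieldType} {n : nat} (A : 'M[C]_n).
Hypothesis A_normal : A \is normalmx.
Local Notation P := (spectralmx A).
Local Notation d := (spectral_diag A).

Lemma spectral_diag_eigenvalue k : eigenvalue A (d 0 k).
Proof.
have P_unit := spectral_unit A.
apply/eigenvalueP; exists (row k P).
  have : P *m A = diag_mx d *m P.
    by rewrite {2}(orthomx_spectralP A_normal) !mulmxA mulmxV // mul1mx.
  move/(congr1 (row k)); rewrite -row_mul => ->.
  by rewrite mul_diag_mx; apply/rowP => j; rewrite !mxE.
apply/eqP => /(congr1 (mulmx^~ (invmx P))).
rewrite -row_mul mulmxV // mul0mx row1 => /rowP/(_ k).
by rewrite !mxE !eqxx /= => /eqP; rewrite oner_eq0.
Qed.

Lemma diag_form_sum (y c : 'rV[C]_n) :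
  (y *m diag_mx c *m y^t*) 0 0 = \sum_k c 0 k * `|y 0 k| ^+ 2.
Proof.
by rewrite mul_mx_diag mxE; apply: eq_bigr => k _; rewrite !mxE normCK mulrAC mulrC.
Qed.

Lemma conjtr_mul_spectral (x : 'rV[C]_n) : (x *m P^t*)^t* = P *m x^t*.
Proof. by rewrite trmx_mul map_mxM trmxCK. Qed.

Lemma spectral_quad_form (x : 'rV[C]_n) :
  (x *m A *m x^t*) 0 0 = \sum_k d 0 k * `|(x *m P^t*) 0 k| ^+ 2.
Proof.
rewrite {1}(orthomx_spectralP A_normal) -diag_form_sum conjtr_mul_spectral.
by rewrite invmx_unitary ?spectral_unitarymx // !mulmxA.
Qed.

Lemma spectral_norm (x : 'rV[C]_n) :
  (x *m x^t*) 0 0 = \sum_k `|(x *m P^t*) 0 k| ^+ 2.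
Proof.
have := diag_form_sum (x *m P^t*) (const_mx 1).
rewrite diag_const_mx mulmx1 conjtr_mul_spectral mulmxA -(mulmxA x).
rewrite -invmx_unitary ?spectral_unitarymx // mulVmx ?spectral_unit // mulmx1 => ->.
by apply: eq_bigr => k _; rewrite mxE mul1r.
Qed.
End NormalSpectral.

Definition quad_form {R : ringType} n (Q : 'M[R]_n) (u : 'I_n -> R) : R :=
  \sum_i \sum_j u i * Q i j * u j.

Section RealSymmetric.
Context {R : rcfType}.
Local Open Scope sesquilinear_scope.
Local Notation f := (real_complex R).

Lemma sym_quad_form_spectral n (Q : 'M[R]_n) (u : 'I_n -> R) : Q^T = Q ->
  exists r c : 'I_n -> R, [/\ forall k, root (char_poly Q) (r k),
    forall k, 0 <= c k, \sum_i u i ^+ 2 = \sum_k c k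
    & quad_form Q u = \sum_k r k * c k].
Proof.
move=> Q_sym; pose QC := Q ^ f.
have QC_herm : QC \is hermsymmx.
  rewrite is_hermitianmxE expr0 scale1r; apply/eqP/matrixP => i j.
  by rewrite !mxE -{1}Q_sym mxE conj_Creal // complex_real.
pose d := spectral_diag QC; pose x : 'rV_n := \row_i f (u i).
pose y := x *m (spectralmx QC)^t*.
have x_real : x^t* = x^T.
  by apply/matrixP => i j; rewrite !mxE conj_Creal // complex_real.
pose r k := complex.Re (d 0 k); pose c k := complex.Re (`|y 0 k| ^+ 2).
have r_real k : f (r k) = d 0 k.
  by rewrite RRe_real //; apply/mxOverP: k; exact: hermitian_spectral_diag_real.
have c_real k : f (c k) = `|y 0 k| ^+ 2.
  by rewrite RRe_real // realX // normr_real.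
have f_sum (F : 'I_n -> R) : f (\sum_k F k) = \sum_k f (F k).
  exact: rmorph_sum.
exists r, c; split.
- move=> k; rewrite -(fmorph_root f) map_char_poly.
  have := spectral_diag_eigenvalue (hermitian_normalmx QC_herm) k.
  by rewrite eigenvalue_root_char -r_real.
- by move=> k; rewrite -ler0c c_real exprn_ge0.
- apply: complexI; rewrite !f_sum.
  under [RHS]eq_bigr do rewrite c_real.
  rewrite -spectral_norm x_real mxE; apply: eq_bigr => i _.
  by rewrite !mxE rmorphXn expr2.
apply: complexI; rewrite !f_sum.
rewrite [RHS](eq_bigr (fun k => d 0 k * `|y 0 k| ^+ 2)); last first.
  by move=> k _; rewrite -r_real -c_real; exact: rmorphM.
rewrite -spectral_quad_form ?hermitian_normalmx // x_real mxE.
under [RHS]eq_bigr do rewrite mxE mulr_suml.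
rewrite exchange_big; apply: eq_bigr => i _; rewrite f_sum.
by apply: eq_bigr => j _; rewrite !mxE !rmorphM.
Qed.

Lemma quad_form_le_roots_ub n (Q : 'M[R]_n) (u : 'I_n -> R) M : Q^T = Q ->
  (forall r, root (char_poly Q) r -> r <= M) ->
  quad_form Q u <= M * \sum_i u i ^+ 2.
Proof.
move=> Q_sym le_M; have [r [c [r_root c_ge0 -> ->]]] := sym_quad_form_spectral u Q_sym.
by rewrite mulr_sumr; apply: ler_sum => k _; rewrite ler_wpM2r ?le_M ?c_ge0.
Qed.

Lemma quad_form_ge_roots_lb n (Q : 'M[R]_n) (u : 'I_n -> R) M : Q^T = Q ->
  (forall r, root (char_poly Q) r -> M <= r) ->
  M * \sum_i u i ^+ 2 <= quad_form Q u.
Proof.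
move=> Q_sym ge_M; have [r [c [r_root c_ge0 -> ->]]] := sym_quad_form_spectral u Q_sym.
by rewrite mulr_sumr; apply: ler_sum => k _; rewrite ler_wpM2r ?ge_M ?c_ge0.
Qed.

Lemma root_le_max_rootsR (p : {poly R}) x x0 : p != 0 -> root p x ->
  x <= \big[Num.max/x0]_(y <- rootsR p) y.
Proof.
move=> p_neq0 px; apply: (le_bigmax_seq x0 x xpredT id) => //.
exact: (root_roots_on (roots_on_rootsR p_neq0)).
Qed.

Lemma min_rootsR_le_root (p : {poly R}) x x0 : p != 0 -> root p x ->
  \big[Num.min/x0]_(y <- rootsR p) y <= x.
Proof.
move=> p_neq0 px; apply: (ge_bigmin_seq x0 x xpredT id) => //.
exact: (root_roots_on (roots_on_rootsR p_neq0)).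
Qed.
End RealSymmetric.

Lemma binary_form_psd {R : realFieldType} (p q r : R) :
  (forall al be : R, 0 <= al ^+ 2 * p - 2 * al * be * q + be ^+ 2 * r) ->
  [/\ 0 <= p, 0 <= r & q ^+ 2 <= p * r].
Proof.
move=> psd.
have p_ge0 : 0 <= p by have := psd 1 0; rewrite expr1n expr0n /= !(mul0r, mulr0); lra.
have r_ge0 : 0 <= r by have := psd 0 1; rewrite expr1n expr0n /= !(mul0r, mulr0); lra.
split => //; have [r_gt0|r_le0] := ltrP 0 r.
  by have := psd r q; nra.
have r0 : r = 0 by apply/eqP; rewrite eq_le r_le0 r_ge0.
subst r; rewrite mulr0; have [-> | q_neq0] := eqVneq q 0; first by rewrite expr0n.
have := psd 1 ((p + 1) / (2 * q)).
have -> : 1 ^+ 2 * p - 2 * 1 * ((p + 1) / (2 * q)) * q + ((p + 1) / (2 * q)) ^+ 2 * 0 = -1.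
  by field.
by rewrite oppr_ge0 ler10.
Qed.

Section BinaryFormEigenvalues.
Context {R : rcfType}.
Variables (c1 c2 S11 S12 S22 a b lam : R).
Hypotheses (c1_gt0 : 0 < c1) (c2_gt0 : 0 < c2).
Hypotheses (aE : a = - (c2 * S11 + c1 * S22)) (bE : b = S11 * S22 - S12 ^+ 2).

Lemma binary_form_eig_ub :
  (forall al be : R, al ^+ 2 * S11 + 2 * al * be * S12 + be ^+ 2 * S22
                       <= lam * (al ^+ 2 * c1 + be ^+ 2 * c2)) ->
  (- a + Num.sqrt (a ^+ 2 - 4 * b * c2 * c1)) / (2 * c2 * c1) <= lam.
Proof.
move=> le_lam.
have [psd11 psd22 det_ge0] : [/\ 0 <= lam * c1 - S11, 0 <= lam * c2 - S22
                      & S12 ^+ 2 <= (lam * c1 - S11) * (lam * c2 - S22)].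
  by apply: binary_form_psd => al be; have := le_lam al be; lra.
set t := 2 * c2 * c1 * lam + a.
have t_ge0 : 0 <= t.
  have -> : t = c2 * (lam * c1 - S11) + c1 * (lam * c2 - S22) by rewrite /t aE; ring.
  by rewrite addr_ge0 // mulr_ge0 // ltW.
have disc_le : a ^+ 2 - 4 * b * c2 * c1 <= t ^+ 2.
  rewrite -subr_ge0.
  have -> : t ^+ 2 - (a ^+ 2 - 4 * b * c2 * c1)
      = 4 * c1 * c2 * ((lam * c1 - S11) * (lam * c2 - S22) - S12 ^+ 2).
    by rewrite /t aE bE; ring.
  apply: mulr_ge0; last by rewrite subr_ge0.
  by rewrite !mulr_ge0 ?ltW.
have : Num.sqrt (a ^+ 2 - 4 * b * c2 * c1) <= t.
  by rewrite -(ger0_norm t_ge0) -sqrtr_sqr ler_wsqrtr.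
rewrite ler_pdivrMr ?mulr_gt0 // /t; lra.
Qed.
End BinaryFormEigenvalues.

Lemma binary_form_eig_lb {R : rcfType} (c1 c2 S11 S12 S22 a b lam : R) :
  0 < c1 -> 0 < c2 -> a = - (c2 * S11 + c1 * S22) -> b = S11 * S22 - S12 ^+ 2 ->
  (forall al be : R, lam * (al ^+ 2 * c1 + be ^+ 2 * c2)
                       <= al ^+ 2 * S11 + 2 * al * be * S12 + be ^+ 2 * S22) ->
  lam <= (- a - Num.sqrt (a ^+ 2 - 4 * b * c2 * c1)) / (2 * c2 * c1).
Proof.
move=> c1_gt0 c2_gt0 aE bE ge_lam.
have : (a + Num.sqrt (a ^+ 2 - 4 * b * c2 * c1)) / (2 * c2 * c1) <= - lam.
  rewrite -[a in a + _]opprK -sqrrN.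
  apply: (@binary_form_eig_ub _ c1 c2 (- S11) (- S12) (- S22)) => //.
  - by rewrite aE; ring.
  - by rewrite bE; ring.
  - by move=> al be; have := ge_lam al be; nra.
by rewrite ler_pdivlMr ?ler_pdivrMr ?mulr_gt0 //; lra.
Qed.

Section GraphDistance.
Variables (n : nat) (e : rel 'I_n).
Hypothesis e_sym : symmetric e.

Lemma walk_of_length_sym k i j : walk_of_length e k i j -> walk_of_length e k j i.
Proof.
case/existsP => p /andP[p_path /eqP p_last]; apply/existsP.
have size_p : size (rev (belast i p)) == k by rewrite size_rev size_belast size_tuple.
exists (Tuple size_p) => /=; apply/andP; split.
  by rewrite -p_last rev_path; apply: sub_path p_path => x y; rewrite e_sym.
by case: (tval p) p_last => [|x s] /= <-; rewrite ?rev_cons ?last_rcons.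
Qed.

Lemma gdist_sym i j : gdist e i j = gdist e j i.
Proof. by apply: eq_find => k; apply/idP/idP => /walk_of_length_sym. Qed.

Lemma gdistxx i : gdist e i i = 0%N.
Proof.
have walk0 : walk_of_length e 0 i i by apply/existsP; exists [tuple] => /=.
have n_gt0 : (0 < n)%N := leq_ltn_trans (leq0n i) (ltn_ord i).
rewrite /gdist; have -> : iota 0 n = 0%N :: iota 1 n.-1 by case: (n) n_gt0.
by rewrite /= walk0.
Qed.

Lemma gdist_edge i j : i != j -> e i j -> gdist e i j = 1%N.
Proof.
move=> i_neq_j eij; have n_gt1 : (1 < n)%N.
  apply: contraNT i_neq_j; rewrite -leqNgt => n_le1; apply/eqP/val_inj => /=.
  by have := ltn_ord i; have := ltn_ord j; lia.
have no_walk0 : ~~ walk_of_length e 0 i j.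
  by apply/existsPn => p; rewrite tuple0.
have walk1 : walk_of_length e 1 i j.
  by apply/existsP; exists [tuple j]; rewrite /= eij eqxx.
rewrite /gdist; have -> : iota 0 n = [:: 0, 1 & iota 2 n.-2]%N by case: (n) n_gt1 => [|[|]].
by rewrite /= (negbTE no_walk0) walk1.
Qed.

End GraphDistance.

Section TwoValuedVector.
Context {R : comRingType} {n : nat}.
Variables (A : {set 'I_n}) (al be : R).

Definition two_valued (i : 'I_n) : R := if i \in A then al else be.

Lemma sum_two_valuedM (f : 'I_n -> R) :
  \sum_i two_valued i * f i = be * \sum_i f i + (al - be) * \sum_(i in A) f i.
Proof.
have onA i : i \in A -> two_valued i * f i = al * f i by rewrite /two_valued => ->.
have offA i : i \notin A -> two_valued i * f i = be * f i.
  by rewrite /two_valued => /negbTE ->.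
rewrite (bigID (mem A)) /= (eq_bigr _ onA) (eq_bigr _ offA) -!mulr_sumr.
rewrite [\sum_i f i](bigID (mem A)) /=; ring.
Qed.

Lemma quad_form_two_valued (F : 'M[R]_n) : F^T = F ->
  let T := \sum_(i in A) \sum_(j in A) F i j in
  let s := \sum_(i in A) \sum_j F i j in
  quad_form F two_valued
    = al ^+ 2 * T + 2 * al * be * (s - T) + be ^+ 2 * (\sum_i \sum_j F i j - 2 * s + T).
Proof.
move=> F_sym T s.
have row i : \sum_j two_valued i * F i j * two_valued j
    = two_valued i * (be * \sum_j F i j + (al - be) * \sum_(j in A) F i j).
  by rewrite -sum_two_valuedM mulr_sumr; apply: eq_bigr => j _; ring.
have col_sum : \sum_i \sum_(j in A) F i j = s.
  rewrite exchange_big; apply: eq_bigr => j _; apply: eq_bigr => i _.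
  by rewrite -{1}F_sym mxE.
rewrite /quad_form (eq_bigr _ (fun i _ => row i)) sum_two_valuedM.
rewrite !big_split /= -!mulr_sumr col_sum -/s -/T; ring.
Qed.

Lemma sum_two_valued_sqr :
  \sum_i two_valued i ^+ 2 = al ^+ 2 * #|A|%:R + be ^+ 2 * (n%:R - #|A|%:R).
Proof.
have := sum_two_valuedM (fun=> 1); rewrite !sumr_const card_ord.
under eq_bigr do rewrite mulr1; move=> sum_u.
have sum_uA : \sum_(i in A) two_valued i = al * #|A|%:R.
  rewrite (eq_bigr (fun=> al)) => [|i iA]; last by rewrite /two_valued iA.
  by rewrite sumr_const mulr_natr.
under eq_bigr do rewrite expr2.
by rewrite sum_two_valuedM sum_u sum_uA; ring.
Qed.
End TwoValuedVector.

Section SignlessDistanceLaplacian.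
Variables (R : rcfType) (n : nat) (e : rel 'I_n).
Hypothesis e_sym : symmetric e.
Implicit Types A : {set 'I_n}.
Local Notation Q := (signless_dist_lap e R).
Local Notation d i j := ((gdist e i j)%:R : R).
Local Notation D := (transmission e R).
Local Notation W := (wiener e R).

Lemma signless_dist_lapE i j : Q i j = (i == j)%:R * D i + d i j.
Proof. by rewrite !mxE mulr_natl. Qed.

Lemma signless_dist_lap_sym : Q^T = Q.
Proof.
apply/matrixP => i j; rewrite mxE !signless_dist_lapE (gdist_sym e_sym).
by case: eqVneq => [->|]; rewrite ?mul0r.
Qed.

Lemma transmissionE i : D i = \sum_j d i j.
Proof. by rewrite [RHS](bigD1 i) //= gdistxx add0r. Qed.

Lemma signless_dist_lap_row_sum i : \sum_j Q i j = 2 * D i.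
Proof.
under eq_bigr do rewrite signless_dist_lapE.
rewrite big_split /= -transmissionE (bigD1 i) //= eqxx mul1r big1 ?addr0.
  by rewrite mulr_natl mulr2n.
by move=> j /negbTE; rewrite eq_sym => ->; rewrite mul0r.
Qed.

Lemma sum_transmission : \sum_i D i = 2 * W.
Proof.
have split_d i j :
    d i j = (if (i < j)%N then d i j else 0) + (if (j < i)%N then d j i else 0).
  case: ltngtP => [_|_|/val_inj ->]; first by rewrite addr0.
    by rewrite add0r (gdist_sym e_sym).
  by rewrite gdistxx addr0.
have W_lt : W = \sum_(i < n) \sum_(j < n) (if (i < j)%N then d i j else 0).
  by apply: eq_bigr => i _; rewrite big_mkcond.
have W_gt : W = \sum_(i < n) \sum_(j < n) (if (j < i)%N then d j i else 0).
  by rewrite W_lt exchange_big.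
under eq_bigr do rewrite transmissionE (eq_bigr _ (fun j _ => split_d _ j)) big_split.
by rewrite big_split /= -W_lt -W_gt mulr_natl mulr2n.
Qed.

(* The sums of [Q] over the blocks A*A, A*~A and ~A*~A when [A] is a clique. *)
Local Notation q11 A := (s_of e R A + #|A|%:R * (#|A|%:R - 1)).
Local Notation q12 A := (s_of e R A - #|A|%:R * (#|A|%:R - 1)).
Local Notation q22 A := (4 * W - 3 * s_of e R A + #|A|%:R * (#|A|%:R - 1)).

Lemma clique_block_sum A :
  is_clique e A -> \sum_(i in A) \sum_(j in A) Q i j = q11 A.
Proof.
move=> A_clique.
have row_in i : i \in A -> \sum_(j in A) Q i j = D i + (#|A|%:R - 1).
  move=> iA; rewrite (bigD1 i) //= signless_dist_lapE eqxx mul1r gdistxx addr0.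
  congr (_ + _); rewrite (eq_bigr (fun=> 1)) => [|j /andP[jA ji]].
    have := sumr_const (mem A) (1 : R); rewrite (bigD1 i) //= => <-.
    by rewrite addrC addrK.
  rewrite signless_dist_lapE eq_sym (negbTE ji) mul0r add0r gdist_edge 1?eq_sym //.
  move/forall_inP: A_clique => /(_ i iA)/forall_inP/(_ j jA)/implyP.
  by rewrite eq_sym; apply.
by rewrite (eq_bigr _ row_in) big_split /= sumr_const mulr_natl.
Qed.

Lemma clique_quad_form A al be : is_clique e A ->
  quad_form Q (two_valued A al be)
    = al ^+ 2 * q11 A + 2 * al * be * q12 A + be ^+ 2 * q22 A.
Proof.
move=> A_clique.
have rows_in : \sum_(i in A) \sum_j Q i j = 2 * s_of e R A.
  by rewrite (eq_bigr _ (fun i _ => signless_dist_lap_row_sum i)) -mulr_sumr.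
have rows_all : \sum_i \sum_j Q i j = 4 * W.
  rewrite (eq_bigr _ (fun i _ => signless_dist_lap_row_sum i)) -mulr_sumr.
  by rewrite sum_transmission mulrA -natrM.
rewrite quad_form_two_valued ?signless_dist_lap_sym //= clique_block_sum //.
by rewrite rows_in rows_all; ring.
Qed.

Lemma a_of_card A : #|A| = clique_number e ->
  a_of e R A = - ((n%:R - #|A|%:R) * q11 A + #|A|%:R * q22 A).
Proof. by rewrite /a_of => ->; ring. Qed.

Lemma b_of_card A :
  #|A| = clique_number e -> b_of e R A = q11 A * q22 A - q12 A ^+ 2.
Proof. by rewrite /b_of => ->; ring. Qed.
End SignlessDistanceLaplacian.

Theorem corollary4p7 (R : rcfType) (n : nat) (e : rel 'I_n) :
  simple_graph e -> connected_graph e ->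
  (2 <= clique_number e)%N -> (clique_number e <= n - 1)%N ->
  (forall A : {set 'I_n}, max_order_clique e A ->
     let w : R := (clique_number e)%:R in
     let a := a_of e R A in let b := b_of e R A in
     (- a + Num.sqrt (a ^+ 2 - 4 * b * (n%:R - w) * w)) / (2 * (n%:R - w) * w)
       <= qD_max e R)
  /\
  (forall A : {set 'I_n}, max_order_clique e A ->
     let w : R := (clique_number e)%:R in
     let a := a_of e R A in let b := b_of e R A in
     qD_min e R <=
       (- a - Num.sqrt (a ^+ 2 - 4 * b * (n%:R - w) * w)) / (2 * (n%:R - w) * w)).
Proof.
move=> [e_sym _] _ w_ge2 w_le.
have Q_sym := signless_dist_lap_sym R e_sym.
have char_neq0 := monic_neq0 (char_poly_monic (signless_dist_lap e R)).
have le_max u :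
    quad_form (signless_dist_lap e R) u <= qD_max e R * \sum_i u i ^+ 2.
  by apply: quad_form_le_roots_ub Q_sym _ => r; exact: root_le_max_rootsR.
have ge_min u :
    qD_min e R * \sum_i u i ^+ 2 <= quad_form (signless_dist_lap e R) u.
  by apply: quad_form_ge_roots_lb Q_sym _ => r; exact: min_rootsR_le_root.
split=> A /andP[A_clique /eqP cardA] /=; rewrite -cardA in w_ge2 w_le *.
all: have k_gt0 : 0 < #|A|%:R :> R by rewrite ltr0n; lia.
all: have nk_gt0 : 0 < n%:R - #|A|%:R :> R by rewrite subr_gt0 ltr_nat; lia.
- apply: (binary_form_eig_ub k_gt0 nk_gt0 (a_of_card R cardA) (b_of_card R cardA)).
  move=> al be.
  by rewrite -clique_quad_form // -sum_two_valued_sqr; apply: le_max.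
- apply: (binary_form_eig_lb k_gt0 nk_gt0 (a_of_card R cardA) (b_of_card R cardA)).
  move=> al be.
  by rewrite -clique_quad_form // -sum_two_valued_sqr; apply: ge_min.
Qed.
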